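(* Let $0<s\le t$ be integers. Then $S_{s,t}=\mathbb{F}_q[x,y]_{s+t}\setminus\mathrm{Im}\,\Phi_{s,t}$.
   Context: $\mathbb{F}_q[x]_{\le s}$ is the set of polynomials in $\mathbb{F}_q[x]$ of degree at most $s$; $\mathbb{F}_q[x,y]_s$ is the space of homogeneous polynomials of degree $s$ in $x,y$ together with $0$. For $p\in\mathbb{F}_q[x,y]_s$, $p_x(x)=p(x,1)$ is its dehomogenization. $\Phi_{s,t}:\mathbb{F}_q[x,y]_s\times\mathbb{F}_q[x,y]_t\to\mathbb{F}_q[x,y]_{s+t}$ is $(f,h)\mapsto fh$, and \[ S_{s,t}=\Big\{p\in\mathbb{F}_q[x,y]_{s+t}:\ \text{if } f\in\mathbb{F}_q[x]_{\le s}\text{ divides }p_x,\ \text{then }\deg\big(p_x/f\big)\ge t+1\Big\}. \] *)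

From HB Require Import structures.
From mathcomp Require Import all_boot all_algebra all_field.
From mathcomp Require Import mpoly.
Set Implicit Arguments. Unset Strict Implicit. Unset Printing Implicit Defensive.
Import GRing.Theory.
Local Open Scope ring_scope.

(* Bivariate polynomials in x = 'X_0 and y = 'X_1 over a field F are
   {mpoly F[2]}; F[x,y]_s is the set of p with p \is s.-homog (0 included). *)

(* Dehomogenization p_x(x) = p(x,1) : x |-> 'X, y |-> 1. *)
Definition dehom (F : fieldType) (p : {mpoly F[2]}) : {poly F} :=
  mmap (@polyC F) (fun i : 'I_2 => if i == 0 then 'X else 1) p.

(* S_{s,t}: p of degree s+t such that every f in F[x]_{<= s} dividing p_x
   has deg (p_x / f) >= t+1, i.e. size (p_x %/ f) >= t+2. *)
Definition S_set (F : fieldType) (s t : nat) (p : {mpoly F[2]}) : Prop :=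
  p \is (s + t)%N.-homog /\
  forall f : {poly F}, (size f <= s.+1)%N -> (f %| dehom p)%R ->
    (t.+2 <= size (dehom p %/ f)%R)%N.

Definition Im_Phi (F : fieldType) (s t : nat) (p : {mpoly F[2]}) : Prop :=
  exists f h : {mpoly F[2]}, [/\ f \is s.-homog, h \is t.-homog & p = f * h].

From HB Require Import structures.
From mathcomp Require Import all_boot all_algebra all_field.
From mathcomp Require Import mpoly.
From mathcomp Require Import zify.
Import GRing.Theory.
Local Open Scope ring_scope.

(* Dehomogenization identifies F[x,y]_d with F[x]_{<= d}, the inverse being
   homogenization q |-> y^d q(x/y), and the homogenization of degree s+t of
   f_x h_x is f h for forms f, h of degrees s, t.  Hence p is in the image of
   Phi_{s,t} exactly when p_x = f h with deg f <= s and deg h <= t, which is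
   exactly the failure of the quotient condition defining S_{s,t}. *)

Section Homogenization.
Variable R : comNzRingType.

Definition hmonom (d i : nat) : 'X_{1..2} :=
  [multinom (if j == 0%N :> nat then i else (d - i)%N) | j < 2].

Definition homogenize (d : nat) (q : {poly R}) : {mpoly R[2]} :=
  \sum_(i < d.+1) q`_i *: 'X_[hmonom d i].

Lemma mdeg_hmonom d i : (i <= d)%N -> mdeg (hmonom d i) = d.
Proof. by move=> le_id; rewrite mdegE !big_ord_recr big_ord0 /= !mnmE /=; lia. Qed.

Lemma hmonomD s t i j : (i <= s)%N -> (j <= t)%N ->
  (hmonom s i + hmonom t j)%MM = hmonom (s + t) (i + j).
Proof. by move=> le_is le_jt; apply/mnmP => k; rewrite mnmDE !mnmE; case: eqP; lia. Qed.

Lemma homogenize_homog d q : homogenize d q \is d.-homog.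
Proof.
apply: rpred_sum => i _; rewrite rpredZ // dhomogX.
by apply/eqP/mdeg_hmonom; rewrite -ltnS.
Qed.

Fact homogenize_is_linear d : linear (homogenize d).
Proof.
move=> c p q; rewrite /homogenize scaler_sumr -big_split.
by apply: eq_bigr => i _; rewrite coefD coefZ scalerDl scalerA.
Qed.

HB.instance Definition _ d :=
  GRing.isSemilinear.Build R {poly R} {mpoly R[2]} _ (homogenize d)
    (GRing.semilinear_linear (homogenize_is_linear d)).

Lemma homogenizeXn d k : (k <= d)%N -> homogenize d 'X^k = 'X_[hmonom d k].
Proof.
move=> le_kd; rewrite /homogenize (bigD1 (Ordinal (le_kd : (k < d.+1)%N))) //=.
rewrite coefXn eqxx scale1r big1 ?addr0 // => i /eqP neq_ik.
by rewrite coefXn; case: eqP => [eq_ik|]; [case: neq_ik; apply: val_inj | rewrite scale0r].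
Qed.

Lemma poly_coef_sum {n} {q : {poly R}} : (size q <= n)%N ->
  q = \sum_(i < n) q`_i *: 'X^i.
Proof.
move=> le_qn; rewrite -poly_def; apply/polyP => k; rewrite coef_poly.
by case: ltnP => // le_nk; rewrite nth_default // (leq_trans le_qn).
Qed.

Lemma homogenizeM s t (f g : {poly R}) :
  (size f <= s.+1)%N -> (size g <= t.+1)%N ->
  homogenize s f * homogenize t g = homogenize (s + t) (f * g).
Proof.
move=> le_fs le_gt.
rewrite [in RHS](poly_coef_sum le_fs) [in RHS](poly_coef_sum le_gt).
rewrite mulr_suml [in RHS]mulr_suml linear_sum; apply: eq_bigr => i _.
rewrite mulr_sumr [in RHS]mulr_sumr linear_sum; apply: eq_bigr => j _.
rewrite -scalerAl -scalerAr scalerA -scalerAl -scalerAr scalerA -exprD linearZ /=.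
have le_is : (i <= s)%N by rewrite -ltnS.
have le_jt : (j <= t)%N by rewrite -ltnS.
by rewrite homogenizeXn ?leq_add // -mpolyXD hmonomD.
Qed.

End Homogenization.
Arguments homogenize {R} d q.

Section Dehomogenization.
Variable F : fieldType.

Lemma mdeg2 (m : 'X_{1..2}) : mdeg m = (m ord0 + m ord_max)%N.
Proof. by rewrite mdegE !big_ord_recr big_ord0 /= add0n; congr (m _ + _)%N; apply: val_inj. Qed.

Lemma dehomE (p : {mpoly F[2]}) :
  dehom p = \sum_(m <- msupp p) p@_m *: 'X^(m ord0).
Proof.
apply: eq_bigr => m _; rewrite /mmap1 !big_ord_recr big_ord0 /=.
rewrite expr1n mulr1 mul1r mul_polyC; congr (_ *: 'X^(m _)); exact: val_inj.
Qed.

Lemma dehomM (f h : {mpoly F[2]}) : dehom (f * h) = dehom f * dehom h.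
Proof. exact: rmorphM. Qed.

Lemma size_dehom_homog d (p : {mpoly F[2]}) : p \is d.-homog ->
  (size (dehom p) <= d.+1)%N.
Proof.
move=> /dhomogP homp; rewrite dehomE big_seq.
apply: (big_ind (fun q : {poly F} => size q <= d.+1)%N).
- by rewrite size_poly0.
- by move=> a b le_a le_b; rewrite (leq_trans (size_polyD _ _)) // geq_max le_a le_b.
move=> m m_supp; rewrite (leq_trans (size_scale_leq _ _)) // size_polyXn ltnS.
by have := homp m m_supp; rewrite /= mdeg2; lia.
Qed.

Lemma dehomK d (p : {mpoly F[2]}) : p \is d.-homog -> homogenize d (dehom p) = p.
Proof.
move=> /dhomogP homp; rewrite dehomE linear_sum [RHS]mpolyE !big_seq.
apply: eq_bigr => m m_supp; rewrite linearZ /=.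
have := homp m m_supp; rewrite /= mdeg2 => deg_m.
rewrite homogenizeXn; last by lia.
congr (_ *: 'X_[_]); apply/mnmP => -[[|[|k]] lt_k2] //=; rewrite mnmE //=.
- by congr (m _); apply: val_inj.
- by rewrite -deg_m addKn; congr (m _); apply: val_inj.
Qed.

End Dehomogenization.

Definition factors_within {F : fieldType} (s t : nat) (P : {poly F}) : Prop :=
  exists f h : {poly F}, [/\ (size f <= s.+1)%N, (size h <= t.+1)%N & P = f * h].

Lemma large_quotientsP (F : fieldType) (s t : nat) (P : {poly F}) :
  (forall f : {poly F}, (size f <= s.+1)%N -> (f %| P)%R -> (t.+2 <= size (P %/ f)%R)%N)
  <-> ~ factors_within s t P.
Proof.
split=> [large [f [h [le_fs le_ht eq_P]]] | no_fact f le_fs dvd_fP].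
  have := large f le_fs; rewrite eq_P dvdp_mulIl => /(_ isT).
  have [->|nz_f] := eqVneq f 0; first by rewrite mul0r div0p size_poly0.
  by rewrite mulKp // leqNgt ltnS le_ht.
rewrite leqNgt ltnS; apply/negP => le_qt; apply: no_fact.
by exists f, (P %/ f); split; rewrite // mulrC divpK.
Qed.

Lemma Im_Phi_factors_within (F : fieldType) (s t : nat) (p : {mpoly F[2]}) :
  p \is (s + t)%N.-homog -> Im_Phi s t p <-> factors_within s t (dehom p).
Proof.
move=> homp; split=> [[f [h [homf homh ->]]] | [f [h [le_fs le_ht eq_p]]]].
  exists (dehom f), (dehom h); split; rewrite ?dehomM //; exact: size_dehom_homog.
exists (homogenize s f), (homogenize t h); split; rewrite ?homogenize_homog //.
by rewrite homogenizeM // -eq_p dehomK.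
Qed.

Theorem lemma3p16 (F : finFieldType) (s t : nat) :
  (0 < s)%N -> (s <= t)%N ->
  forall p : {mpoly F[2]},
    S_set s t p <-> (p \is (s + t)%N.-homog /\ ~ Im_Phi s t p).
Proof.
move=> _ _ p.
split=> -[homp Sp]; split=> //.
- by rewrite Im_Phi_factors_within //; apply/large_quotientsP.
- by apply/large_quotientsP; rewrite -Im_Phi_factors_within.
Qed.
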